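(* Let $D\ge 1$ and let $\mathscr{G}_1,\mathscr{G}_2: L^2([0,1]^D)\to L^2([0,1]^D)$ be trace-class covariance operators of finite ranks $K_1,K_2<\infty$, respectively, whose eigenfunctions are real analytic on $[0,1]^D$. Let $\mathscr{B}_1,\mathscr{B}_2: L^2([0,1]^D)\to L^2([0,1]^D)$ be trace-class covariance operators that are banded with bandwidths $\underline{\delta}_1=(\delta_{1,1},\dots,\delta_{1,D})$ and $\underline{\delta}_2=(\delta_{2,1},\dots,\delta_{2,D})$, respectively, where every component $\delta_{i,d}$ satisfies $0<\delta_{i,d}<1$. Then $$\mathscr{G}_1+\mathscr{B}_1=\mathscr{G}_2+\mathscr{B}_2 \iff \mathscr{G}_1=\mathscr{G}_2\ \text{ and }\ \mathscr{B}_1=\mathscr{B}_2 .$$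
   Context: A covariance operator $\mathscr{B}$ on $L^2([0,1]^D)$ with kernel $b$ is called $\underline{\delta}$-banded, $\underline{\delta}=(\delta_1,\dots,\delta_D)$ with $\delta_d>0$, if $b(\underline{s}_1,\underline{s}_2)=0$ whenever $|s_{1,d}-s_{2,d}|\ge\delta_d$ for some $d\in\{1,\dots,D\}$ (equivalently $b(\underline{s}_1,\underline{s}_2)=\mathbb{1}\{|s_{1,d}-s_{2,d}|<\delta_d\ \forall d\}\,b(\underline{s}_1,\underline{s}_2)$). A function on $[0,1]^D$ is called real analytic on $[0,1]^D$ if it is the restriction of a real analytic function defined on some open set $U\subset\mathbb{R}^D$ containing $[0,1]^D$. By Mercer's theorem a finite-rank covariance $\mathscr{G}$ has kernel $g(\underline{s}_1,\underline{s}_2)=\sum_{k=1}^K\lambda_k\eta_k(\underline{s}_1)\eta_k(\underline{s}_2)$ with $\lambda_k>0$ and orthonormal eigenfunctions $\eta_k$. *)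

From HB Require Import structures.
From mathcomp Require Import all_boot all_order all_algebra.
From mathcomp Require Import all_classical all_reals all_analysis.
Set Implicit Arguments. Unset Strict Implicit. Unset Printing Implicit Defensive.
Import Order.TTheory GRing.Theory Num.Theory.
Import numFieldNormedType.Exports.
Local Open Scope classical_set_scope.
Local Open Scope ring_scope.

(* Points of R^n are n-tuples (with the product Borel sigma-algebra of
   mathcomp-analysis).  Coordinate d of s is  tnth s d. *)

Definition cube (R : realType) (n : nat) (s : n.-tuple R) : Prop :=
  forall d : 'I_n, 0 <= tnth s d <= 1.

(* Lebesgue integral over [0,1]^n of a nonnegative measurable (extended-real)
   function, written as the iterated one-dimensional Lebesgue integral
   (equal to the integral w.r.t. n-dimensional Lebesgue measure by Tonelli). *)
Fixpoint cube_nnint (R : realType) (n : nat) : (n.-tuple R -> \bar R) -> \bar R :=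
  match n return (n.-tuple R -> \bar R) -> \bar R with
  | 0 => fun f => f [tuple]
  | n'.+1 => fun f =>
      (\int[@lebesgue_measure R]_(x in `[0%R, 1%R]%classic)
         cube_nnint (fun t : n'.-tuple R => f (cons_tuple x t)))%E
  end.

Definition cube_int (R : realType) (n : nat) (f : n.-tuple R -> R) : R :=
  fine (cube_nnint (fun t => (Num.max (f t) 0)%:E))
  - fine (cube_nnint (fun t => (Num.max (- f t) 0)%:E)).

Definition L2 (R : realType) (n : nat) (f : n.-tuple R -> R) : Prop :=
  measurable_fun setT f /\ (cube_nnint (fun t => (f t ^+ 2)%:E) < +oo)%E.

Definition ip (R : realType) (n : nat) (f g : n.-tuple R -> R) : R :=
  cube_int (fun t => f t * g t).

Definition kern (R : realType) (D : nat) := D.-tuple R -> D.-tuple R -> R.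

Definition kint (R : realType) (D : nat) (k : D.-tuple R -> D.-tuple R -> \bar R)
  : \bar R := cube_nnint (fun s => cube_nnint (fun t => k s t)).

(* Two integral (Hilbert-Schmidt) operators with kernels k1, k2 are equal
   iff their kernels agree almost everywhere on [0,1]^D x [0,1]^D. *)
Definition op_eq (R : realType) (D : nat) (k1 k2 : kern R D) : Prop :=
  kint (fun s t => (`|k1 s t - k2 s t|)%:E) = 0%E.

Definition quad (R : realType) (D : nat) (k : kern R D) (f : D.-tuple R -> R) : R :=
  cube_int (fun s => cube_int (fun t => k s t * f s * f t)).

(* k is the kernel of a covariance operator on L^2([0,1]^D):
   square-integrable (measurable) kernel, self-adjoint, positive semidefinite. *)
Definition covariance_kernel (R : realType) (D : nat) (k : kern R D) : Prop :=
  [/\ measurable_fun setT (fun p : D.-tuple R * D.-tuple R => k p.1 p.2),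
      (kint (fun s t => (k s t ^+ 2)%:E) < +oo)%E,
      op_eq k (fun s t => k t s)
    & forall f, L2 f -> 0 <= quad k f].

Definition onb (R : realType) (D : nat) (e : nat -> D.-tuple R -> R) : Prop :=
  [/\ forall m, L2 (e m),
      forall m n, ip (e m) (e n) = (m == n)%:R
    & forall f, L2 f -> (forall m, ip f (e m) = 0) ->
        cube_nnint (fun t => (f t ^+ 2)%:E) = 0%E].

(* trace class (for a positive operator): sum_m <K e_m, e_m> < oo for an ONB *)
Definition trace_class (R : realType) (D : nat) (k : kern R D) : Prop :=
  exists e, onb e /\ (\sum_(m <oo) (quad k (e m))%:E < +oo)%E.

Definition banded (R : realType) (D : nat) (delta : 'I_D -> R) (k : kern R D)
  : Prop :=
  forall s t, cube s -> cube t ->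
    (exists d : 'I_D, delta d <= `|tnth s d - tnth t d|) -> k s t = 0.

Definition open_set (R : realType) (n : nat) (U : set (n.-tuple R)) : Prop :=
  forall x, U x -> exists2 e : R, 0 < e &
    forall y, (forall d, `|tnth y d - tnth x d| < e) -> U y.

(* partial sums over the boxes {alpha | alpha_d < N} of the multivariate
   power series  sum_alpha c_alpha (x - x0)^alpha  and of its absolute series *)
Definition ps_partial (R : realType) (n : nat) (c : ('I_n -> nat) -> R)
  (x0 x : n.-tuple R) (N : nat) : R :=
  \sum_(a : {ffun 'I_n -> 'I_N})
     c (fun d => nat_of_ord (a d)) * \prod_(d < n) (tnth x d - tnth x0 d) ^+ a d.

Definition ps_abs_partial (R : realType) (n : nat) (c : ('I_n -> nat) -> R)
  (x0 x : n.-tuple R) (N : nat) : R :=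
  \sum_(a : {ffun 'I_n -> 'I_N})
     `|c (fun d => nat_of_ord (a d))| *
       \prod_(d < n) `|tnth x d - tnth x0 d| ^+ a d.

Definition real_analytic_on (R : realType) (n : nat) (U : set (n.-tuple R))
  (f : n.-tuple R -> R) : Prop :=
  forall x0, U x0 -> exists2 r : R, 0 < r & exists c : ('I_n -> nat) -> R,
    forall x, (forall d, `|tnth x d - tnth x0 d| < r) -> U x ->
      (exists M : R, forall N, ps_abs_partial c x0 x N <= M) /\
      ((fun N => ps_partial c x0 x N) @ \oo --> f x).

Definition real_analytic_on_cube (R : realType) (n : nat) (eta : n.-tuple R -> R)
  : Prop :=
  exists U : set (n.-tuple R), exists f : n.-tuple R -> R,
    [/\ open_set U, (forall x, cube x -> U x), real_analytic_on U f
      & forall x, cube x -> f x = eta x].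

Definition mercer (R : realType) (D K : nat) (lam : 'I_K -> R)
  (eta : 'I_K -> D.-tuple R -> R) : kern R D :=
  fun s t => \sum_(k < K) lam k * eta k s * eta k t.

(* (lam, eta) is the eigen-decomposition of a covariance operator of rank K
   with real-analytic eigenfunctions *)
Definition analytic_finite_rank (R : realType) (D K : nat) (lam : 'I_K -> R)
  (eta : 'I_K -> D.-tuple R -> R) : Prop :=
  [/\ forall k, 0 < lam k,
      forall k, L2 (eta k),
      forall j k, ip (eta j) (eta k) = (j == k)%:R
    & forall k, real_analytic_on_cube (eta k)].

From HB Require Import structures.
From mathcomp Require Import all_boot all_order all_algebra.
From mathcomp Require Import all_classical all_reals all_analysis.
From mathcomp Require Import ring lra.
Set Implicit Arguments. Unset Strict Implicit. Unset Printing Implicit Defensive.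
Import Order.TTheory GRing.Theory Num.Theory.
Import numFieldNormedType.Exports.
Local Open Scope classical_set_scope.
Local Open Scope ring_scope.

(* The difference G of the two Mercer kernels is continuous on the cube and
   real analytic along every coordinate line.  Near the corner of
   [0,1]^D x [0,1]^D where the first coordinates of s and t are far apart,
   both banded kernels vanish; so if the two sums agree almost everywhere,
   G vanishes almost everywhere, hence by continuity everywhere, on an open
   box of pairs.  The one-variable identity theorem, applied one coordinate
   at a time, spreads G = 0 to the whole of [0,1]^D x [0,1]^D, and then the
   banded parts agree too.  Conversely, if the Mercer parts agree almost
   everywhere, the same argument on the full box gives G = 0 everywhere. *)

Section analytic01.
Context {R : realType}.
Implicit Types (g : R -> R) (c : nat -> R).

Lemma cvg_dist_le (u : nat -> R) (l a B : R) (N0 : nat) :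
  u @ \oo --> l -> (forall n, (N0 <= n)%N -> `|u n - a| <= B) -> `|l - a| <= B.
Proof.
move=> ul uB; apply/ler_addgt0Pr => e e0.
near \oo => n.
have lu : `|l - u n| < e by near: n; exact: cvgr_dist_lt.
have Nn : (N0 <= n)%N by near: n; exact: nbhs_infty_ge.
apply: le_trans (ler_distD (u n) l a) _.
by rewrite addrC lerD ?uB // ltW.
Unshelve. all: by end_near.
Qed.

Lemma le0_of_le_scaled (a M : R) :
  0 <= M -> (forall q, 0 < q <= 1 -> a <= q * M) -> a <= 0.
Proof.
move=> M0 aM; rewrite leNgt; apply/negP => a0.
have den : 0 < a + M + 1 by lra.
have q0 : 0 < a / (a + M + 1) by rewrite divr_gt0.
have q1 : a / (a + M + 1) <= 1 by rewrite ler_pdivrMr // mul1r; lra.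
have := aM (a / (a + M + 1)); rewrite q0 q1 => /(_ isT).
rewrite mulrAC ler_pdivlMr //; nra.
Qed.

Lemma exists_pos_lt2 (r e : R) : 0 < r -> 0 < e ->
  exists rho, [/\ 0 < rho, rho < r & rho < e].
Proof.
move=> r0 e0; exists (Num.min r e / 2).
have m0 : 0 < Num.min r e by rewrite lt_min r0 e0.
have [mr me] : Num.min r e <= r /\ Num.min r e <= e by rewrite !ge_min !lexx orbT.
by split; [rewrite divr_gt0 | lra | lra].
Qed.

Definition power_series_on c (T r : R) g : Prop :=
  forall x, `|x - T| < r -> 0 <= x <= 1 ->
    (exists M, forall N, \sum_(j < N) `|c j| * `|x - T| ^+ j <= M) /\
    ((fun N => \sum_(j < N) c j * (x - T) ^+ j) @ \oo --> g x).

Definition analytic01_at g (T : R) : Prop :=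
  exists2 r : R, 0 < r & exists c, power_series_on c T r g.

Lemma power_series_tail_le c (rho q M y : R) (m N : nat) :
  0 <= rho -> 0 <= q <= 1 -> `|y| <= q * rho ->
  (forall N, \sum_(j < N) `|c j| * rho ^+ j <= M) ->
  (forall j, (j < m)%N -> c j = 0) -> (m < N)%N ->
  `|\sum_(j < N) c j * y ^+ j - c m * y ^+ m| <= q ^+ m.+1 * M.
Proof.
move=> rho0 /andP[q0 q1] yq cM cm0 mN.
rewrite (bigD1 (Ordinal mN)) //= addrAC subrr add0r.
apply: le_trans (ler_norm_sum _ _ _) _.
apply: (@le_trans _ _ (\sum_(j < N | j != Ordinal mN) q ^+ m.+1 * (`|c j| * rho ^+ j))).
  apply: ler_sum => j jm; rewrite normrM normrX.
  case: (ltngtP j m) => [jm'|mj|jE]; last by rewrite eqE /= jE eqxx in jm.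
    by rewrite cm0 // normr0 !mul0r mulr0.
  rewrite mulrCA ler_wpM2l //.
  apply: (@le_trans _ _ ((q * rho) ^+ j)); first by apply: lerXn2r; rewrite ?nnegrE ?mulr_ge0.
  by rewrite exprMn ler_wpM2r ?exprn_ge0 // ler_wiXn2l.
rewrite -mulr_sumr ler_wpM2l ?exprn_ge0 //; apply: le_trans (cM N).
rewrite [leRHS](bigD1 (Ordinal mN)) //= lerDr.
by rewrite mulr_ge0 ?exprn_ge0.
Qed.

(* Strong induction on [m]: once the lower coefficients vanish, [g x = 0] is
   [c m * (x - T) ^+ m] up to [O(|x - T| ^+ m.+1)] as [x] tends to [T] from the left. *)
Lemma power_series_coef_eq0 g c (T r e : R) :
  0 < r -> 0 < e -> e <= T -> T <= 1 -> power_series_on c T r g ->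
  (forall x, T - e < x < T -> g x = 0) -> forall m, c m = 0.
Proof.
move=> r0 e0 eT T1 gc g0.
have [rho [rho0 rhor rhoe]] := exists_pos_lt2 r0 e0.
have [M cM] : exists M, forall N, \sum_(j < N) `|c j| * rho ^+ j <= M.
  have dist : `|T - rho - T| = rho by rewrite addrAC subrr add0r normrN gtr0_norm.
  have x01 : 0 <= T - rho <= 1 by apply/andP; split; lra.
  have Tr : `|T - rho - T| < r by rewrite dist.
  have [[M HM] _] := gc (T - rho) Tr x01.
  by exists M => N; rewrite -dist.
have M0 : 0 <= M by have := cM 0%N; rewrite big_ord0.
elim/ltn_ind => m IH; apply/eqP; rewrite -normr_le0.
suff : `|c m| * rho ^+ m <= 0 by rewrite pmulr_lle0 // exprn_gt0.
apply: (le0_of_le_scaled M0) => q /andP[q0 q1].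
set x := T - q * rho.
have qrho0 : 0 < q * rho by rewrite mulr_gt0.
have qrho : q * rho <= rho by rewrite ler_piMl // ltW.
have dist : `|x - T| = q * rho by rewrite /x addrAC subrr add0r normrN gtr0_norm.
have x01 : 0 <= x <= 1 by apply/andP; split; rewrite /x; lra.
have gx : g x = 0 by apply: g0; apply/andP; split; rewrite /x; lra.
have xr : `|x - T| < r by rewrite dist; lra.
have [_ cv] := gc x xr x01.
have q01 : 0 <= q <= 1 by rewrite ltW.
have xT : `|x - T| <= q * rho by rewrite dist.
have := cvg_dist_le cv (fun N => power_series_tail_le (ltW rho0) q01 xT cM IH).
rewrite gx sub0r normrN normrM normrX dist exprMn exprS => h.
have qm0 : 0 < q ^+ m by rewrite exprn_gt0.
rewrite -(ler_pM2l qm0).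
have -> : q ^+ m * (`|c m| * rho ^+ m) = `|c m| * (q ^+ m * rho ^+ m) by ring.
by have -> : q ^+ m * (q * M) = q * q ^+ m * M by ring.
Qed.

Lemma analytic01_at_eq0_near g (T e : R) :
  analytic01_at g T -> 0 < e -> e <= T -> T <= 1 ->
  (forall x, T - e < x < T -> g x = 0) ->
  exists2 r, 0 < r & forall x, `|x - T| < r -> 0 <= x <= 1 -> g x = 0.
Proof.
move=> [r r0 [c gc]] e0 eT T1 g0; exists r => // x xT x01.
have c0 := power_series_coef_eq0 r0 e0 eT T1 gc g0.
have [_ cv] := gc x xT x01.
apply/eqP; rewrite -normr_le0 -[g x]subr0.
apply: (cvg_dist_le (N0 := 0%N) cv) => N _.
by rewrite big1 ?subr0 ?normr0 // => j _; rewrite c0 mul0r.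
Qed.

Lemma analytic01_at_reflect g (T : R) :
  analytic01_at g (1 - T) -> analytic01_at (fun x => g (1 - x)) T.
Proof.
move=> [r r0 [c gc]]; exists r => //; exists (fun j => c j * (-1) ^+ j) => x xT x01.
have E : 1 - x - (1 - T) = - (x - T) by ring.
have xT' : `|1 - x - (1 - T)| < r by rewrite E normrN.
have x01' : 0 <= 1 - x <= 1 by move: x01 => /andP[? ?]; apply/andP; split; lra.
have [[M cM] cv] := gc (1 - x) xT' x01'.
split.
  exists M => N; apply: le_trans (cM N); rewrite E normrN.
  by under eq_bigr do rewrite normrM normrX normrN normr1 expr1n mulr1.
suff -> : (fun N => \sum_(j < N) c j * (-1) ^+ j * (x - T) ^+ j) =
  (fun N => \sum_(j < N) c j * (1 - x - (1 - T)) ^+ j) by [].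
by apply/funext => N; apply: eq_bigr => j _; rewrite E [in RHS]exprNn mulrA.
Qed.

(* Continuation to the right: the supremum [T] of the points up to which [g]
   vanishes must be [1], since [g] also vanishes on a neighbourhood of [T]. *)
Lemma analytic01_eq0_right g (a b : R) :
  (forall T, 0 <= T <= 1 -> analytic01_at g T) ->
  0 <= a -> a < b -> b <= 1 -> (forall x, a < x < b -> g x = 0) ->
  forall x, a < x <= 1 -> g x = 0.
Proof.
move=> ga a0 ab b1 g0.
pose S := [set y | y <= 1 /\ forall x, a < x < y -> g x = 0].
have S1 : ubound S 1 by move=> y [].
have supS : has_sup S by split; [exists b | exists 1].
pose T := sup S.
have bT : b <= T by apply: sup_upper_bound.
have T1 : T <= 1 by apply: ge_sup => //; exists b.
have gT : forall x, a < x < T -> g x = 0.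
  move=> x /andP[ax xT].
  have Tx : 0 < T - x by rewrite subr_gt0.
  have [y [_ gy] yx] := sup_adherent Tx supS.
  by apply: gy; rewrite ax /=; rewrite /T in yx; lra.
have gT' : forall x, T - (T - a) < x < T -> g x = 0.
  by move=> x; rewrite opprB addrC subrK; exact: gT.
have T01 : 0 <= T <= 1 by apply/andP; split; lra.
have Ta0 : 0 < T - a by lra.
have TaT : T - a <= T by lra.
have [r r0 gr] := analytic01_at_eq0_near (ga T T01) Ta0 TaT T1 gT'.
have T_eq1 : T = 1.
  apply/eqP; rewrite eq_le T1 /= leNgt; apply/negP => T1lt.
  pose y := Num.min 1 (T + r / 2).
  have [Ty y1 yr] : [/\ T < y, y <= 1 & y <= T + r / 2].
    by split; rewrite ?lt_min ?T1lt ?ltrDl ?divr_gt0 // ge_min lexx ?orbT.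
  suff /(sup_upper_bound supS) : S y by rewrite -/T; lra.
  split => // x /andP[ax xy]; case: (ltP x T) => xT; first by apply: gT; rewrite ax.
  by apply: gr; [rewrite ger0_norm; lra | apply/andP; split; lra].
move=> x /andP[ax x1]; case: (ltP x T) => xT; first by apply: gT; rewrite ax.
by apply: gr; [have -> : x = T by lra | apply/andP; split; lra]; rewrite subrr normr0.
Qed.

Lemma analytic01_identity g (a b : R) :
  (forall T, 0 <= T <= 1 -> analytic01_at g T) ->
  0 <= a -> a < b -> b <= 1 -> (forall x, a < x < b -> g x = 0) ->
  forall x, 0 <= x <= 1 -> g x = 0.
Proof.
move=> ga a0 ab b1 g0 x /andP[x0 x1].
have [ax|xa] := ltP a x; first by apply: (analytic01_eq0_right ga a0 ab b1 g0); rewrite ax.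
have ga' : forall T, 0 <= T <= 1 -> analytic01_at (fun y => g (1 - y)) T.
  by move=> T /andP[T0 T1]; apply/analytic01_at_reflect/ga/andP; split; lra.
have g0' : forall y, 1 - b < y < 1 - a -> g (1 - y) = 0.
  by move=> y /andP[yb ya]; apply: g0; apply/andP; split; lra.
rewrite -[x](subKr 1).
apply: (analytic01_eq0_right ga' _ _ _ g0'); try (apply/andP; split); lra.
Qed.

Lemma eq_analytic01_at g1 g2 (T : R) : (forall x, 0 <= x <= 1 -> g1 x = g2 x) ->
  analytic01_at g1 T -> analytic01_at g2 T.
Proof.
move=> g12 [r r0 [c gc]]; exists r => //; exists c => x xT x01.
by rewrite -g12 //; exact: gc.
Qed.

Lemma analytic01_at0 (T : R) : analytic01_at (fun=> 0) T.
Proof.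
exists 1 => //; exists (fun=> 0) => x _ _; split.
  by exists 0 => N; rewrite big1 // => j _; rewrite normr0 mul0r.
under eq_fun do under eq_bigr do rewrite mul0r; under eq_fun do rewrite big1_eq.
exact: cvg_cst.
Qed.

Lemma analytic01_atD g1 g2 (T : R) : analytic01_at g1 T -> analytic01_at g2 T ->
  analytic01_at (fun x => g1 x + g2 x) T.
Proof.
move=> [r1 r10 [c1 gc1]] [r2 r20 [c2 gc2]].
exists (Num.min r1 r2); first by rewrite lt_min r10 r20.
exists (fun j => c1 j + c2 j) => x; rewrite lt_min => /andP[xr1 xr2] x01.
have [[M1 cM1] cv1] := gc1 x xr1 x01.
have [[M2 cM2] cv2] := gc2 x xr2 x01.
split.
  exists (M1 + M2) => N; apply: le_trans (lerD (cM1 N) (cM2 N)).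
  rewrite -big_split /=; apply: ler_sum => j _.
  by rewrite -mulrDl ler_wpM2r ?exprn_ge0 ?ler_normD.
under eq_fun do under eq_bigr do rewrite mulrDl; under eq_fun do rewrite big_split.
exact: cvgD.
Qed.

Lemma analytic01_atMl (k : R) g (T : R) :
  analytic01_at g T -> analytic01_at (fun x => k * g x) T.
Proof.
move=> [r r0 [c gc]]; exists r => //; exists (fun j => k * c j) => x xT x01.
have [[M cM] cv] := gc x xT x01.
split.
  exists (`|k| * M) => N; apply: le_trans (ler_wpM2l (normr_ge0 k) (cM N)).
  by rewrite mulr_sumr; under eq_bigr do rewrite normrM -mulrA.
under eq_fun do under eq_bigr do rewrite -mulrA; under eq_fun do rewrite -mulr_sumr.
exact: cvgM (cvg_cst k) cv.
Qed.

Lemma analytic01_atB g1 g2 (T : R) : analytic01_at g1 T -> analytic01_at g2 T ->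
  analytic01_at (fun x => g1 x - g2 x) T.
Proof.
move=> g1a g2a; apply: (eq_analytic01_at (g1 := fun x => g1 x + (-1) * g2 x)).
  by move=> x _; rewrite mulN1r.
exact/analytic01_atD/analytic01_atMl.
Qed.

Lemma analytic01_at_sum (K : nat) (F : 'I_K -> R -> R) (T : R) :
  (forall k, analytic01_at (F k) T) -> analytic01_at (fun x => \sum_(k < K) F k x) T.
Proof.
elim: K F => [|K IH] F Fa.
  by apply: eq_analytic01_at (analytic01_at0 T) => x _; rewrite big_ord0.
apply: eq_analytic01_at (analytic01_atD (IH _ (fun k => Fa (widen_ord (leqnSn K) k)))
  (Fa ord_max)).
by move=> x _; rewrite big_ord_recr.
Qed.

End analytic01.

Lemma sum_multi_index_axis {S : comNzRingType} (n N : nat) (d : 'I_n)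
    (F : ('I_n -> nat) -> S) (y : 'I_n -> S) :
  (forall i, i != d -> y i = 0) ->
  \sum_(a : {ffun 'I_n -> 'I_N}) F (fun i => nat_of_ord (a i)) * \prod_(i < n) y i ^+ a i
  = \sum_(j < N) F (fun i => if i == d then nat_of_ord j else 0%N) * y d ^+ j.
Proof.
move=> y0.
rewrite (partition_big (fun a : {ffun 'I_n -> 'I_N} => a d) xpredT) //=.
apply: eq_bigr => j _.
have N0 : (0 < N)%N by apply: leq_ltn_trans (ltn_ord j).
pose aj : {ffun 'I_n -> 'I_N} := [ffun i => if i == d then j else Ordinal N0].
rewrite (bigD1 aj) /=; last by rewrite ffunE eqxx.
rewrite [X in _ + X]big1 ?addr0; last first.
  move=> a /andP[/eqP ad aneq].
  have [i ai] : exists i, a i != aj i.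
    apply/existsP; rewrite -negb_forall; apply: contra aneq => /forallP aaj.
    by apply/eqP/ffunP => i; exact/eqP.
  have id : i != d by apply: contra ai => /eqP ->; rewrite ad ffunE eqxx.
  have ai0 : nat_of_ord (a i) != 0%N.
    by apply: contra ai; rewrite ffunE (negbTE id) => /eqP ai0; apply/eqP/val_inj.
  by rewrite (bigD1 i) //= y0 // expr0n (negbTE ai0) mul0r mulr0.
congr (F _ * _).
  by apply/funext => i; rewrite ffunE; case: (i == d).
rewrite (bigD1 d) //= big1 ?mulr1; first by rewrite ffunE eqxx.
by move=> i id; rewrite ffunE (negbTE id) expr0.
Qed.

Section cube_slices.
Context {R : realType} {D : nat}.
Implicit Types (x : D.-tuple R) (l u : 'I_D -> R).

Definition upd x (d : 'I_D) (t : R) : D.-tuple R :=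
  [tuple if i == d then t else tnth x i | i < D].

Lemma tnth_upd x d t i : tnth (upd x d t) i = if i == d then t else tnth x i.
Proof. by rewrite tnth_mktuple. Qed.

Lemma upd_id x d : upd x d (tnth x d) = x.
Proof. by apply: eq_from_tnth => i; rewrite tnth_upd; case: eqP => // ->. Qed.

Lemma cube_upd x d t : cube x -> 0 <= t <= 1 -> cube (upd x d t).
Proof. by move=> cx t01 i; rewrite tnth_upd; case: (i == d). Qed.

Definition separately_analytic (Z : D.-tuple R -> R) : Prop :=
  forall x d, cube x -> forall T, 0 <= T <= 1 -> analytic01_at (fun t => Z (upd x d t)) T.

Lemma real_analytic_on_cube_separately (eta : D.-tuple R -> R) :
  real_analytic_on_cube eta -> separately_analytic eta.
Proof.
case=> U [f [_ cU fa feta]] x d cx T T01.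
have cxT := cube_upd d cx T01.
have [r r0 [c fc]] := fa _ (cU _ cxT).
apply: (eq_analytic01_at (g1 := fun t => f (upd x d t))).
  by move=> t t01; rewrite feta //; exact: cube_upd.
exists r => //; exists (fun j => c (fun i => if i == d then j else 0%N)) => t tT t01.
have cxt := cube_upd d cx t01.
have dist i : tnth (upd x d t) i - tnth (upd x d T) i = if i == d then t - T else 0.
  by rewrite !tnth_upd; case: (i == d); rewrite ?subrr.
have off_d i : i != d -> tnth (upd x d t) i - tnth (upd x d T) i = 0.
  by move/negbTE; rewrite dist => ->.
have near i : `|tnth (upd x d t) i - tnth (upd x d T) i| < r.
  by rewrite dist; case: (i == d); rewrite ?normr0.
have [[M fM] cv] := fc _ near (cU _ cxt).
have distd : tnth (upd x d t) d - tnth (upd x d T) d = t - T by rewrite dist eqxx.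
split.
  exists M => N; apply: le_trans (fM N).
  rewrite /ps_abs_partial (sum_multi_index_axis N (fun a => `|c a|) (d := d)) ?distd //.
  by move=> i /off_d ->; rewrite normr0.
suff <- : (fun N => ps_partial c (upd x d T) (upd x d t) N) =
  (fun N => \sum_(j < N) c (fun i => if i == d then nat_of_ord j else 0%N) * (t - T) ^+ j)
  by [].
by apply/funext => N; rewrite /ps_partial (sum_multi_index_axis N c off_d) distd.
Qed.

Definition in_box l u x : Prop := forall d, l d < tnth x d < u d.

Definition box_in_cube l u : Prop := forall d, [/\ 0 <= l d, l d < u d & u d <= 1].

Lemma in_box_cube l u x : box_in_cube l u -> in_box l u x -> cube x.
Proof.
move=> lu xlu d; have [l0 _ u1] := lu d; have /andP[lx xu] := xlu d.
by apply/andP; split; lra.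
Qed.

(* Induction on [k]: [Z x = 0] as soon as the coordinates of [x] from [k] on
   lie in the box; the one-variable identity theorem releases coordinate [k]. *)
Lemma separately_analytic_eq0 (Z : D.-tuple R -> R) l u :
  separately_analytic Z -> box_in_cube l u -> (forall x, in_box l u x -> Z x = 0) ->
  forall x, cube x -> Z x = 0.
Proof.
move=> Za lu Z0.
suff Zk k : (k <= D)%N -> forall x, cube x ->
    (forall d : 'I_D, (k <= d)%N -> l d < tnth x d < u d) -> Z x = 0.
  by move=> x cx; apply: (Zk D) => // d; rewrite leqNgt ltn_ord.
elim: k => [|k IH] kD x cx xk; first by apply: Z0 => d; apply: xk.
pose dk : 'I_D := Ordinal kD.
have [l0 lu' u1] := lu dk.
rewrite -(upd_id x dk); apply: (analytic01_identity (Za x dk cx) l0 lu' u1 _ (cx dk)).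
move=> t /andP[lt tu]; apply: (IH (ltnW kD)).
  by apply: cube_upd => //; apply/andP; split; lra.
move=> d kd; rewrite tnth_upd; case: eqP => [->|ndk]; first by rewrite lt tu.
apply: xk; rewrite ltn_neqAle kd andbT; apply/eqP => kdE.
by apply: ndk; apply: val_inj; rewrite /= kdE.
Qed.

Lemma kernel_eq0_of_box (Z : D.-tuple R -> D.-tuple R -> R) lA uA lB uB :
  (forall t, cube t -> separately_analytic (Z^~ t)) ->
  (forall s, cube s -> separately_analytic (Z s)) ->
  box_in_cube lA uA -> box_in_cube lB uB ->
  (forall s t, in_box lA uA s -> in_box lB uB t -> Z s t = 0) ->
  forall s t, cube s -> cube t -> Z s t = 0.
Proof.
move=> Za1 Za2 A B Z0 s t cs; apply: (separately_analytic_eq0 (Za2 s cs) B) => t' Bt'.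
by apply: (separately_analytic_eq0 (Za1 t' (in_box_cube B Bt')) A) => // s' As'; apply: Z0.
Qed.

Lemma mercer_separately_analytic_l (K : nat) (lam : 'I_K -> R)
    (eta : 'I_K -> D.-tuple R -> R) t :
  (forall k, real_analytic_on_cube (eta k)) -> separately_analytic (mercer lam eta ^~ t).
Proof.
move=> etaa x d cx T T01; apply: analytic01_at_sum => k.
apply: (eq_analytic01_at (g1 := fun y => lam k * eta k t * eta k (upd x d y))).
  by move=> y _; rewrite mulrAC.
exact/analytic01_atMl/real_analytic_on_cube_separately.
Qed.

Lemma mercer_separately_analytic_r (K : nat) (lam : 'I_K -> R)
    (eta : 'I_K -> D.-tuple R -> R) s :
  (forall k, real_analytic_on_cube (eta k)) -> separately_analytic (mercer lam eta s).
Proof.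
move=> etaa x d cx T T01; apply: analytic01_at_sum => k.
exact/analytic01_atMl/real_analytic_on_cube_separately.
Qed.

End cube_slices.

Section analytic_continuity.
Context {R : realType}.

Lemma prod_norm_le_scaled (n : nat) (a : 'I_n -> nat) (y : 'I_n -> R) (th p : R) :
  0 <= th <= 1 -> 0 <= p -> (forall i, `|y i| <= th * p) -> (exists i, a i != 0%N) ->
  \prod_(i < n) `|y i| ^+ a i <= th * \prod_(i < n) p ^+ a i.
Proof.
move=> /andP[th0 th1] p0 yp [i0 ai0].
apply: (@le_trans _ _ (\prod_(i < n) (th * p) ^+ a i)).
  apply: ler_prod => i _; rewrite exprn_ge0 //=.
  by apply: lerXn2r; rewrite ?nnegrE ?mulr_ge0.
under eq_bigr do rewrite exprMn; rewrite big_split /= prodrXr.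
have pa0 : 0 <= \prod_(i < n) p ^+ a i by apply: prodr_ge0 => i _; exact: exprn_ge0.
rewrite ler_wpM2r // -[leRHS]expr1; apply: ler_wiXn2l => //.
by rewrite (bigD1 i0) //= addn_gt0 lt0n ai0.
Qed.

(* Every nonconstant monomial is at most [th] times its value at [z]. *)
Lemma ps_partial_sub_coef0_le (n N : nat) (c : ('I_n -> nat) -> R)
    (x0 x z : n.-tuple R) (th p M : R) :
  0 <= th <= 1 -> 0 < p -> (forall d, tnth z d - tnth x0 d = p) ->
  ps_abs_partial c x0 z N <= M -> (forall d, `|tnth x d - tnth x0 d| <= th * p) ->
  (0 < N)%N -> `|ps_partial c x0 x N - c (fun _ => 0%N)| <= th * M.
Proof.
move=> th01 p0 zp cM xp N0; have /andP[th0 th1] := th01.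
pose a0 : {ffun 'I_n -> 'I_N} := [ffun _ => Ordinal N0].
have ca0 : c (fun d => nat_of_ord (a0 d)) = c (fun _ => 0%N).
  by congr c; apply/funext => i; rewrite ffunE.
rewrite /ps_partial (bigD1 a0) //= ca0.
rewrite [X in _ * X]big1 ?mulr1 => [|i _]; last by rewrite ffunE expr0.
rewrite addrAC subrr add0r; apply: le_trans (ler_norm_sum _ _ _) _.
apply: (@le_trans _ _ (\sum_(a | a != a0) th * (`|c (fun d => nat_of_ord (a d))| *
    \prod_(i < n) `|tnth z i - tnth x0 i| ^+ a i))).
  apply: ler_sum => a aa0; rewrite normrM mulrCA ler_wpM2l //.
  have zpa : \prod_(i < n) `|tnth z i - tnth x0 i| ^+ a i = \prod_(i < n) p ^+ a i.
    by apply: eq_bigr => i _; rewrite zp gtr0_norm.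
  rewrite zpa normr_prod; under eq_bigr do rewrite normrX.
  apply: prod_norm_le_scaled => //; first exact: ltW.
  have [i ai] : exists i, a i != a0 i.
    apply/existsP; rewrite -negb_forall; apply: contra aa0 => /forallP aa0.
    by apply/eqP/ffunP => i; exact/eqP.
  by exists i; apply: contra ai; rewrite ffunE => /eqP ai0; apply/eqP/val_inj.
rewrite -mulr_sumr ler_wpM2l //; apply: le_trans cM.
rewrite /ps_abs_partial [leRHS](bigD1 a0) //= lerDr.
by rewrite mulr_ge0 ?prodr_ge0 // => i _; exact: exprn_ge0.
Qed.

Lemma real_analytic_on_cube_continuous (D : nat) (eta : D.-tuple R -> R) x0 e :
  real_analytic_on_cube eta -> cube x0 -> 0 < e ->
  exists2 rho, 0 < rho & forall x, cube x ->
    (forall d, `|tnth x d - tnth x0 d| < rho) -> `|eta x - eta x0| < e.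
Proof.
case=> U [f [oU cU fa feta]] cx0 e0.
have [r r0 [c fc]] := fa x0 (cU _ cx0).
have [w w0 xw] := oU x0 (cU _ cx0).
have [p [p0 pr pw]] := exists_pos_lt2 r0 w0.
(* The absolute series at [z] bounds every monomial near [x0]. *)
pose z := [tuple tnth x0 i + p | i < D].
have zp d : tnth z d - tnth x0 d = p by rewrite tnth_mktuple addrAC subrr add0r.
have zr d : `|tnth z d - tnth x0 d| < r by rewrite zp gtr0_norm.
have Uz : U z by apply: xw => d; rewrite zp gtr0_norm.
have [[M cM] _] := fc z zr Uz.
have M0 : 0 <= M.
  apply: le_trans (cM 0%N); apply: sumr_ge0 => a _.
  by rewrite mulr_ge0 ?prodr_ge0 // => i _; exact: exprn_ge0.
have f_near th x : 0 <= th <= 1 -> U x ->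
    (forall d, `|tnth x d - tnth x0 d| <= th * p) -> `|f x - c (fun _ => 0%N)| <= th * M.
  move=> th01 Ux xp; have /andP[_ th1] := th01.
  have xr d : `|tnth x d - tnth x0 d| < r.
    by apply: le_lt_trans (xp d) _; apply: le_lt_trans pr; rewrite ler_piMl // ltW.
  have [_ cv] := fc x xr Ux.
  exact: cvg_dist_le cv (fun N => ps_partial_sub_coef0_le th01 p0 zp (cM N) xp).
have fx0 : f x0 = c (fun _ => 0%N).
  have th0 : 0 <= (0 : R) <= 1 by rewrite lexx ler01.
  have x0p d : `|tnth x0 d - tnth x0 d| <= 0 * p by rewrite subrr normr0 mul0r.
  by move: (f_near 0 x0 th0 (cU _ cx0) x0p); rewrite mul0r normr_le0 subr_eq0 => /eqP.
have M1 : 0 < M + 1 by lra.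
pose th := Num.min 1 (e / (M + 1) / 2).
have th0 : 0 < th by rewrite lt_min ltr01 !divr_gt0.
have th01 : 0 <= th <= 1 by rewrite ltW //= ge_min lexx.
have the : th <= e / (M + 1) / 2 by rewrite ge_min lexx orbT.
exists (th * p); first by rewrite mulr_gt0.
move=> x cx xp; rewrite -!feta // fx0.
apply: le_lt_trans (f_near th x th01 (cU _ cx) (fun d => ltW (xp d))) _.
apply: (@le_lt_trans _ _ (e / (M + 1) / 2 * (M + 1))).
  by apply: ler_pM; [exact: ltW | exact: M0 | exact: the | lra].
by rewrite mulrAC divfK ?gt_eqF // ltr_pdivrMr //; lra.
Qed.

End analytic_continuity.

Section cube_integrals.
Context {R : realType}.
Local Open Scope ereal_scope.

Lemma ge0_le_integral_nonmeasurable d (T : measurableType d)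
    (mu : {measure set T -> \bar R}) (A : set T) (f g : T -> \bar R) :
  (forall x, A x -> 0 <= f x) -> (forall x, A x -> f x <= g x) ->
  \int[mu]_(x in A) f x <= \int[mu]_(x in A) g x.
Proof.
move=> f0 fg.
have g0 x : A x -> 0 <= g x by move=> Ax; exact: le_trans (f0 x Ax) (fg x Ax).
rewrite !ge0_integralE //; apply: ereal_sup_le => _ [h hf <-]; exists h => //= x.
apply: le_trans (hf x) _; rewrite /patch; case: ifP => // /set_mem Ax.
exact: fg.
Qed.

Lemma integral01_ge_box (F : R -> \bar R) (l w k : R) :
  (0 <= l)%R -> (l + w <= 1)%R -> (0 < w)%R -> (0 <= k)%R -> (forall x, 0 <= F x) ->
  (forall x, (l <= x <= l + w)%R -> k%:E <= F x) ->
  (k * w)%:E <= \int[@lebesgue_measure R]_(x in `[0%R, 1%R]%classic) F x.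
Proof.
move=> l0 lw1 w0 k0 F0 Fk.
pose A := `[l, (l + w)%R]%classic.
have mA : measurable A by exact: measurable_itv.
apply: (@le_trans _ _ (\int[@lebesgue_measure R]_(x in `[0%R, 1%R]%classic)
    (k * \1_A x)%:E)); last first.
  apply: ge0_le_integral_nonmeasurable => x _; first by rewrite lee_fin mulr_ge0.
  rewrite indicE; have [/set_mem|_] := boolP (x \in A); last by rewrite mulr0.
  by rewrite /A /= in_itv /= mulr1; exact: Fk.
have kA := @integralZl_indic _ _ R (@lebesgue_measure R) _ (measurable_itv `[0%R, 1%R])
  (fun=> A) k.
rewrite /= in kA; rewrite kA //; last by move=> /(le_lt_trans k0); rewrite ltxx.
rewrite integral_indic //.
have -> : A `&` `[0%R, 1%R]%classic = A.
  apply/setIidl => x; rewrite /A /= !in_itv /= => /andP[lx xw].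
  by rewrite (le_trans l0 lx) (le_trans xw lw1).
have Aw : (@lebesgue_measure R) A = w%:E.
  by rewrite /A lebesgue_measure_itv /= lte_fin ltrDl w0 -EFinD addrAC subrr add0r.
by rewrite [X in _ <= _ * X](_ : _ = w%:E) -?EFinM //; exact: Aw.
Qed.

Lemma cube_nnint_ge0 (n : nat) (f : n.-tuple R -> \bar R) :
  (forall x, 0 <= f x) -> 0 <= cube_nnint f.
Proof.
elim: n f => [|n IH] f f0 /=; first exact: f0.
by apply: integral_ge0 => x _; apply: IH.
Qed.

Lemma eq_cube_nnint (n : nat) (f g : n.-tuple R -> \bar R) :
  (forall x, cube x -> f x = g x) -> cube_nnint f = cube_nnint g.
Proof.
elim: n f g => [|n IH] f g fg /=; first by apply: fg => -[].
apply: eq_integral => x /set_mem; rewrite /= in_itv /= => /andP[x0 x1].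
apply: IH => t ct; apply: fg => i.
rewrite (tnth_nth 0%R); case: i => [[|k] ik] /=; first by rewrite x0.
by move: (ct (Ordinal (ltnSE ik))); rewrite (tnth_nth 0%R).
Qed.

Lemma cube_nnint0 (n : nat) : cube_nnint (fun _ : n.-tuple R => 0) = 0.
Proof.
elim: n => [|n IH] //=.
by under eq_integral do rewrite IH; rewrite integral0.
Qed.

Lemma cube_nnint_ge_box (n : nat) (f : n.-tuple R -> \bar R) (l : 'I_n -> R) (w k : R) :
  (0 < w)%R -> (0 <= k)%R -> (forall d, 0 <= l d)%R -> (forall d, l d + w <= 1)%R ->
  (forall x, 0 <= f x) -> (forall x, (forall d, l d <= tnth x d <= l d + w)%R -> k%:E <= f x) ->
  (k * w ^+ n)%:E <= cube_nnint f.
Proof.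
elim: n f l => [|n IH] f l w0 k0 l0 lw1 f0 fk /=.
  by rewrite expr0 mulr1; apply: fk => -[].
rewrite exprSr mulrA; apply: (integral01_ge_box (l := l ord0)) => //.
- by rewrite mulr_ge0 // exprn_ge0 // ltW.
- by move=> x; apply: cube_nnint_ge0.
move=> x lxw; apply: (IH _ (fun d => l (lift ord0 d))) => // t lt.
apply: fk => i; rewrite (tnth_nth 0%R); case: i => [[|j] ij] /=.
  by have -> : Ordinal ij = ord0 by exact: val_inj.
have -> : Ordinal ij = lift ord0 (Ordinal (ltnSE ij)) by exact: val_inj.
by move: (lt (Ordinal (ltnSE ij))); rewrite (tnth_nth 0%R).
Qed.

Local Close Scope ereal_scope.

Context {D : nat}.

Lemma eq_kint (f g : D.-tuple R -> D.-tuple R -> \bar R) :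
  (forall s t, cube s -> cube t -> f s t = g s t) -> kint f = kint g.
Proof.
move=> fg; apply: eq_cube_nnint => s cs; apply: eq_cube_nnint => t ct.
exact: fg.
Qed.

Lemma kint0 : kint (fun _ _ : D.-tuple R => 0%E) = 0%E.
Proof. by rewrite /kint; under eq_fun do rewrite cube_nnint0; rewrite cube_nnint0. Qed.

Lemma kint_norm_neq0 (h : kern R D) (ls lt : 'I_D -> R) (w k : R) :
  0 < w -> 0 < k -> (forall d, 0 <= ls d) -> (forall d, ls d + w <= 1) ->
  (forall d, 0 <= lt d) -> (forall d, lt d + w <= 1) ->
  (forall s t, (forall d, ls d <= tnth s d <= ls d + w) ->
     (forall d, lt d <= tnth t d <= lt d + w) -> k <= `|h s t|) ->
  kint (fun s t => (`|h s t|)%:E) <> 0%E.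
Proof.
move=> w0 k0 ls0 lsw lt0 ltw hk.
have kw0 : 0 < k * w ^+ D by rewrite mulr_gt0 // exprn_gt0.
have : ((k * w ^+ D * w ^+ D)%:E <= kint (fun s t => (`|h s t|)%:E))%E.
  apply: cube_nnint_ge_box (ltW kw0) ls0 lsw _ _ => // [s|s hs].
    by apply: cube_nnint_ge0 => t.
  by apply: cube_nnint_ge_box (ltW k0) lt0 ltw _ _ => // t ht; rewrite lee_fin hk.
move=> + h0; rewrite h0 lee_fin leNgt => /negP; apply.
by rewrite mulr_gt0 // exprn_gt0.
Qed.

Lemma op_eq_on_cube (k1 k2 : kern R D) :
  (forall s t, cube s -> cube t -> k1 s t = k2 s t) -> op_eq k1 k2.
Proof.
move=> k12; rewrite /op_eq -kint0; apply: eq_kint => s t cs ct.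
by rewrite k12 // subrr normr0.
Qed.

Lemma op_eq_add2l_on_cube (m1 m2 b1 b2 : kern R D) :
  (forall s t, cube s -> cube t -> m1 s t = m2 s t) ->
  op_eq (fun s t => m1 s t + b1 s t) (fun s t => m2 s t + b2 s t) <-> op_eq b1 b2.
Proof.
move=> m12; rewrite /op_eq (@eq_kint _ (fun s t => (`|b1 s t - b2 s t|)%:E)) //.
by move=> s t cs ct; rewrite m12 // opprD addrACA subrr add0r.
Qed.

End cube_integrals.

Section kernel_continuity.
Context {R : realType} {D : nat}.
Implicit Types (x : D.-tuple R) (l u : 'I_D -> R).

Definition cube2_ball (s0 t0 : D.-tuple R) (e : R) : set (D.-tuple R * D.-tuple R) :=
  [set p | [/\ cube p.1, cube p.2, forall d, `|tnth p.1 d - tnth s0 d| < e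
                                 & forall d, `|tnth p.2 d - tnth t0 d| < e]].

Definition cube2_nbhs (s0 t0 : D.-tuple R) := filter_from [set e : R | 0 < e] (cube2_ball s0 t0).

Instance cube2_nbhs_filter (s0 t0 : D.-tuple R) : Filter (cube2_nbhs s0 t0).
Proof.
apply: filter_from_filter; first by exists 1; rewrite /= ltr01.
move=> e1 e2 /= e10 e20; exists (Num.min e1 e2); first by rewrite /= lt_min e10 e20.
move=> p [c1 c2 p1 p2]; split; split => // d; [move: (p1 d) | move: (p2 d)
  | move: (p1 d) | move: (p2 d)]; by rewrite lt_min => /andP[].
Qed.

Lemma cvg_cube2_fst (eta : D.-tuple R -> R) (s0 t0 : D.-tuple R) :
  real_analytic_on_cube eta -> cube s0 ->
  (fun p : D.-tuple R * D.-tuple R => eta p.1) @ cube2_nbhs s0 t0 --> eta s0.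
Proof.
move=> etaa cs0; apply/cvgrPdist_lt => e e0.
have [rho rho0 etarho] := real_analytic_on_cube_continuous etaa cs0 e0.
by exists rho => // p [cp1 _ p1 _] /=; rewrite distrC; exact: etarho.
Qed.

Lemma cvg_cube2_snd (eta : D.-tuple R -> R) (s0 t0 : D.-tuple R) :
  real_analytic_on_cube eta -> cube t0 ->
  (fun p : D.-tuple R * D.-tuple R => eta p.2) @ cube2_nbhs s0 t0 --> eta t0.
Proof.
move=> etaa ct0; apply/cvgrPdist_lt => e e0.
have [rho rho0 etarho] := real_analytic_on_cube_continuous etaa ct0 e0.
by exists rho => // p [_ cp2 _ p2] /=; rewrite distrC; exact: etarho.
Qed.

Lemma cvg_cube2_mercer (K : nat) (lam : 'I_K -> R) (eta : 'I_K -> D.-tuple R -> R)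
    (s0 t0 : D.-tuple R) :
  (forall k, real_analytic_on_cube (eta k)) -> cube s0 -> cube t0 ->
  (fun p : D.-tuple R * D.-tuple R => mercer lam eta p.1 p.2) @ cube2_nbhs s0 t0 -->
  mercer lam eta s0 t0.
Proof.
move=> etaa cs0 ct0; rewrite /mercer; apply: (cvg_big add_continuous) => k _.
by apply: cvgM; [apply: cvgM; [exact: cvg_cst | exact: cvg_cube2_fst] | exact: cvg_cube2_snd].
Qed.

Lemma cvg_norm_ge_half (G : kern R D) (s0 t0 : D.-tuple R) :
  (fun p : D.-tuple R * D.-tuple R => G p.1 p.2) @ cube2_nbhs s0 t0 --> G s0 t0 ->
  G s0 t0 != 0 ->
  exists2 rho, 0 < rho & forall s t, cube2_ball s0 t0 rho (s, t) ->
    `|G s0 t0| / 2 <= `|G s t|.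
Proof.
move=> Gc G0.
have e0 : 0 < `|G s0 t0| / 2 by rewrite divr_gt0 // normr_gt0.
have [rho rho0 Grho] := (cvgrPdist_lt _ _).1 Gc _ e0.
exists rho => // s t st; have /= Gst := Grho _ st.
have := ler_normD (G s0 t0 - G s t) (G s t); rewrite subrK => Gtri.
have half : `|G s0 t0| / 2 + `|G s0 t0| / 2 = `|G s0 t0| by rewrite -splitr.
lra.
Qed.

Lemma in_box_margin l u x : in_box l u x ->
  exists2 m, 0 < m & forall d, l d < tnth x d - m /\ tnth x d + m < u d.
Proof.
move=> xlu; pose F d := Num.min (tnth x d - l d) (u d - tnth x d).
set M := \big[Num.min/1]_d F d.
have M0 : 0 < M.
  apply/bigmin_gtP; split => // d _; have /andP[lx xu] := xlu d.
  by rewrite lt_min !subr_gt0 lx xu.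
exists (M / 2) => [|d]; first by rewrite divr_gt0.
have [Ml Mu] : M <= tnth x d - l d /\ M <= u d - tnth x d.
  by split; apply: le_trans (bigmin_le 1 d F) _; rewrite ge_min lexx ?orbT.
by split; lra.
Qed.

Lemma in_box_of_near l u x0 x (m w rho : R) :
  (forall d, l d < tnth x0 d - m /\ tnth x0 d + m < u d) -> w < m -> w < rho ->
  (forall d, tnth x0 d - w <= tnth x d <= tnth x0 d - w + (w + w)) ->
  in_box l u x /\ forall d, `|tnth x d - tnth x0 d| < rho.
Proof.
move=> x0m wm wrho xw; split=> d; have [m1 m2] := x0m d; have /andP[x1 x2] := xw d.
  by apply/andP; split; lra.
by rewrite ltr_norml; apply/andP; split; lra.
Qed.

(* If [G] were nonzero at a point of the boxes, continuity would keep [|h|]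
   above [|G s0 t0| / 2] on a small cube around it, making [kint |h|] positive. *)
Lemma eq0_of_kint_norm_eq0 (h G : kern R D) lA uA lB uB :
  kint (fun s t => (`|h s t|)%:E) = 0%E -> box_in_cube lA uA -> box_in_cube lB uB ->
  (forall s t, in_box lA uA s -> in_box lB uB t -> h s t = G s t) ->
  (forall s0 t0, cube s0 -> cube t0 ->
     (fun p : D.-tuple R * D.-tuple R => G p.1 p.2) @ cube2_nbhs s0 t0 --> G s0 t0) ->
  forall s t, in_box lA uA s -> in_box lB uB t -> G s t = 0.
Proof.
move=> h0 A B hG Gc s0 t0 As0 Bt0.
have [//|G0] := eqVneq (G s0 t0) 0.
have [rho rho0 Grho] := cvg_norm_ge_half (Gc _ _ (in_box_cube A As0) (in_box_cube B Bt0)) G0.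
have [ms ms0 s0m] := in_box_margin As0.
have [mt mt0 t0m] := in_box_margin Bt0.
have mst0 : 0 < Num.min ms mt by rewrite lt_min ms0 mt0.
have [w [w0 wrho]] := exists_pos_lt2 rho0 mst0; rewrite lt_min => /andP[wms wmt].
exfalso; apply: (kint_norm_neq0 (ls := fun d => tnth s0 d - w)
  (lt := fun d => tnth t0 d - w) (w := w + w) (k := `|G s0 t0| / 2) _ _ _ _ _ _ _ h0).
- lra.
- by rewrite divr_gt0 // normr_gt0.
- by move=> d; have [l0 _ _] := A d; have [m1 _] := s0m d; lra.
- by move=> d; have [_ _ u1] := A d; have [_ m2] := s0m d; lra.
- by move=> d; have [l0 _ _] := B d; have [m1 _] := t0m d; lra.
- by move=> d; have [_ _ u1] := B d; have [_ m2] := t0m d; lra.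
move=> s t /(in_box_of_near s0m wms wrho)[As s0s] /(in_box_of_near t0m wmt wrho)[Bt t0t].
rewrite hG //; apply: Grho.
by split => //; [exact: in_box_cube As | exact: in_box_cube Bt].
Qed.

Lemma mercer_eq_of_kint_box (K1 K2 : nat) (lam1 : 'I_K1 -> R) (eta1 : 'I_K1 -> D.-tuple R -> R)
    (lam2 : 'I_K2 -> R) (eta2 : 'I_K2 -> D.-tuple R -> R) (h : kern R D) lA uA lB uB :
  (forall k, real_analytic_on_cube (eta1 k)) -> (forall k, real_analytic_on_cube (eta2 k)) ->
  box_in_cube lA uA -> box_in_cube lB uB -> kint (fun s t => (`|h s t|)%:E) = 0%E ->
  (forall s t, in_box lA uA s -> in_box lB uB t ->
     h s t = mercer lam1 eta1 s t - mercer lam2 eta2 s t) ->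
  forall s t, cube s -> cube t -> mercer lam1 eta1 s t = mercer lam2 eta2 s t.
Proof.
move=> eta1a eta2a A B h0 hG s t cs ct; apply/eqP; rewrite -subr_eq0; apply/eqP.
pose G s t := mercer lam1 eta1 s t - mercer lam2 eta2 s t.
apply: (kernel_eq0_of_box (Z := G) _ _ A B) => // [{}t {}ct|{}s {}cs|].
- move=> x d cx T T01; apply: analytic01_atB.
    exact: mercer_separately_analytic_l.
  exact: mercer_separately_analytic_l.
- move=> x d cx T T01; apply: analytic01_atB.
    exact: mercer_separately_analytic_r.
  exact: mercer_separately_analytic_r.
apply: (eq0_of_kint_norm_eq0 h0 A B hG) => s0 t0 cs0 ct0.
by apply: cvgB; exact: cvg_cube2_mercer.
Qed.

End kernel_continuity.

Lemma far_boxes_in_cube {R : realType} {D : nat} (d0 : 'I_D) (m : R) : 0 <= m < 1 ->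
  exists lA uA lB uB, [/\ box_in_cube lA uA, box_in_cube lB uB
    & forall s t, in_box lA uA s -> in_box lB uB t -> m < `|tnth s d0 - tnth t d0|].
Proof.
move=> /andP[m0 m1]; pose a := (1 - m) / 2.
have a0 : 0 < a by rewrite divr_gt0 // subr_gt0.
have am : a + a = 1 - m by rewrite -splitr.
exists (fun=> 0), (fun d => if d == d0 then a else 1),
  (fun d => if d == d0 then 1 - a else 0), (fun=> 1).
split=> [d|d|s t s_lo t_hi]; try by case: (d == d0); split; lra.
have := s_lo d0; have := t_hi d0; rewrite eqxx => /andP[t1 _] /andP[_ s1].
by rewrite distrC ger0_norm; lra.
Qed.

Theorem theorem1 (R : realType) (D : nat) (hD : (1 <= D)%N)
  (K1 K2 : nat) (lam1 : 'I_K1 -> R) (eta1 : 'I_K1 -> D.-tuple R -> R)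
  (lam2 : 'I_K2 -> R) (eta2 : 'I_K2 -> D.-tuple R -> R)
  (b1 b2 : kern R D) (delta1 delta2 : 'I_D -> R) :
  analytic_finite_rank lam1 eta1 ->
  analytic_finite_rank lam2 eta2 ->
  covariance_kernel b1 -> trace_class b1 ->
  covariance_kernel b2 -> trace_class b2 ->
  (forall d, 0 < delta1 d < 1) -> (forall d, 0 < delta2 d < 1) ->
  banded delta1 b1 -> banded delta2 b2 ->
  (op_eq (fun s t => mercer lam1 eta1 s t + b1 s t)
         (fun s t => mercer lam2 eta2 s t + b2 s t)
   <-> op_eq (mercer lam1 eta1) (mercer lam2 eta2) /\ op_eq b1 b2).
Proof.
move=> [_ _ _ eta1a] [_ _ _ eta2a] _ _ _ _ delta1_01 delta2_01 b1band b2band.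
split=> [sum_eq | [mercer_eq b_eq]]; last first.
  have full : box_in_cube (D := D) (fun=> 0 : R) (fun=> 1) by move=> d; split; lra.
  have m12 := mercer_eq_of_kint_box eta1a eta2a full full mercer_eq (fun s t _ _ => erefl).
  exact/(op_eq_add2l_on_cube _ _ m12).
pose d0 : 'I_D := Ordinal hD; pose m := Num.max (delta1 d0) (delta2 d0).
have /andP[d10 d11] := delta1_01 d0; have /andP[d20 d21] := delta2_01 d0.
have m01 : 0 <= m < 1 by rewrite le_max gt_max ltW ?d10 ?d11.
have [d1m d2m] : delta1 d0 <= m /\ delta2 d0 <= m by rewrite !le_max !lexx orbT.
have [lA [uA [lB [uB [A B far]]]]] := far_boxes_in_cube d0 m01.
have b0 b delta : banded delta b -> delta d0 <= m ->
    forall s t, in_box lA uA s -> in_box lB uB t -> b s t = 0.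
  move=> bband dm s t As Bt.
  apply: bband; [exact: in_box_cube A As | exact: in_box_cube B Bt | exists d0].
  exact: le_trans dm (ltW (far s t As Bt)).
have m12 : forall s t, cube s -> cube t -> mercer lam1 eta1 s t = mercer lam2 eta2 s t.
  apply: (mercer_eq_of_kint_box eta1a eta2a A B sum_eq) => s t As Bt.
  by rewrite (b0 _ _ b1band d1m s t As Bt) (b0 _ _ b2band d2m s t As Bt) !addr0.
split; [exact: op_eq_on_cube m12 | exact/(op_eq_add2l_on_cube _ _ m12)].
Qed.
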